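(* Let $n \geq 8$ be an integer. Then the class $\mathcal{Q}$ of functions on $\mathbb{R}^n$ (defined in the context) is empty. That is, there is no function $Q:\mathbb{R}^n\to\mathbb{R}$ of the form $Q(x)=x^TMx$ such that (a) $M\in\mathbb{R}^{n\times n}$ is nonzero, symmetric and nonnegative definite; (b) $Q(Ax)\le Q(x)$ for every $A\in\mathcal{A}$ and every $x\in\mathbb{R}^n$; and (c) $Q(\mathbf{e})=0$.
   Context: Fix a positive integer $n$. Let $\mathbf{e}\in\mathbb{R}^n$ be the vector with all components equal to $1$. A square matrix is stochastic if it is entrywise nonnegative and each row sums to $1$. Let $\mathcal{A}\subset\mathbb{R}^{n\times n}$ be the set of stochastic matrices $A=(a_{ij})$ such that: (i) $a_{ii}>0$ for all $i$; (ii) all positive entries in any given row of $A$ are equal; (iii) $a_{ij}>0$ if and only if $a_{ji}>0$; (iv) the graph on vertex set $\{1,\dots,n\}$ with edge set $\{(i,j): a_{ij}>0\}$ is connected. (These are exactly the matrices of one iteration $x\mapsto Ax$ of the equal-neighbor averaging algorithm on a symmetric connected graph with self-loops, where each node replaces its value by the unweighted average of its neighbors' values, including its own.) The class $\mathcal{Q}$ consists of all functions $Q:\mathbb{R}^n\to\mathbb{R}$ of the form $Q(x)=x^TMx$ where (a) $M$ is nonzero, symmetric and nonnegative definite; (b) $Q(Ax)\le Q(x)$ for all $A\in\mathcal{A}$ and $x\in\mathbb{R}^n$; (c) $Q(\mathbf{e})=0$. *)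

From mathcomp Require Import all_boot all_order all_algebra.
From mathcomp Require Import reals.
Set Implicit Arguments. Unset Strict Implicit. Unset Printing Implicit Defensive.
Import Order.TTheory GRing.Theory Num.Theory.
Local Open Scope ring_scope.

Definition stochastic (R : realType) (n : nat) (A : 'M[R]_n) : Prop :=
  (forall i j, 0 <= A i j) /\ (forall i, \sum_(j < n) A i j = 1).

Definition in_classA (R : realType) (n : nat) (A : 'M[R]_n) : Prop :=
  [/\ stochastic A,
      (forall i, 0 < A i i),
      (forall i j k, 0 < A i j -> 0 < A i k -> A i j = A i k),
      (forall i j, (0 < A i j) <-> (0 < A j i))
    & (forall i j, connect (fun a b : 'I_n => 0 < A a b) i j)].

Definition qform (R : realType) (n : nat) (M : 'M[R]_n) (x : 'cV[R]_n) : R :=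
  (x^T *m M *m x) ord0 ord0.

Definition nonneg_definite (R : realType) (n : nat) (M : 'M[R]_n) : Prop :=
  forall x : 'cV[R]_n, 0 <= qform M x.

Definition in_classQ (R : realType) (n : nat) (M : 'M[R]_n) : Prop :=
  [/\ M != 0, M^T = M, nonneg_definite M,
      (forall (A : 'M[R]_n) (x : 'cV[R]_n), in_classA A ->
          qform M (A *m x) <= qform M x)
    & qform M (const_mx 1) = 0].

From mathcomp Require Import all_boot all_order all_algebra all_fingroup.
From mathcomp Require Import reals.
From mathcomp Require Import ring lra zify.
Set Implicit Arguments. Unset Strict Implicit. Unset Printing Implicit Defensive.
Import Order.TTheory GRing.Theory Num.Theory.
Local Open Scope ring_scope.

(* Summing Q(P_s x) over all coordinate permutations s gives a positive multiple of
   tr M * (n * sum_i x_i^2 - (sum_i x_i)^2): the off-diagonal mass of M is -tr M by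
   Q(e) = 0, and tr M > 0 as M is a nonzero positive semidefinite matrix.  Since A
   is closed under relabelling the nodes, every Q in the class therefore forces the
   sample variance to be nonincreasing along equal-neighbor averaging.  This fails on
   the tree joining node 0 to 1, ..., 4 and node 4 to the n - 5 leaves 5, ..., n - 1:
   from (-3, -1, -1, -1, 3, 1, ..., 1) one step moves every leaf from 1 to 2, away
   from the mean, and for n >= 8 the variance increases. *)

Lemma sum_kronecker (R : pzSemiRingType) n (F : 'I_n -> R) i :
  \sum_j (i == j)%:R * F j = F i.
Proof.
rewrite (bigD1 i) //= eqxx mul1r big1 ?addr0 // => j ji.
by rewrite eq_sym (negbTE ji) mul0r.
Qed.

Section QuadraticForm.
Variables (R : realType) (n : nat).
Implicit Types (M : 'M[R]_n) (x u v : 'cV[R]_n).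

Lemma qformE M x : qform M x = \sum_i \sum_j x i 0 * M i j * x j 0.
Proof.
rewrite /qform mxE exchange_big /=; apply: eq_bigr => j _.
by rewrite mxE mulr_suml; apply: eq_bigr => i _; rewrite !mxE.
Qed.

Lemma qformD M u v : qform M (u + v) =
  qform M u + qform M v + (u^T *m M *m v + v^T *m M *m u) 0 0.
Proof.
by rewrite /qform [(u + v)^T]raddfD /= !mulmxDl !mulmxDr !mxE; ring.
Qed.

Lemma qformZ M a u : qform M (a *: u) = a ^+ 2 * qform M u.
Proof.
by rewrite /qform [(a *: u)^T]linearZ /= -scalemxAl -scalemxAr -scalemxAl !mxE mulrA -expr2.
Qed.

Lemma delta_mx_form M i j :
  ((delta_mx i 0 : 'cV[R]_n)^T *m M *m (delta_mx j 0 : 'cV[R]_n)) 0 0 = M i j.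
Proof. by rewrite trmx_delta -rowE -colE !mxE. Qed.

Lemma trace_gt0 M : M != 0 -> M^T = M -> nonneg_definite M -> 0 < \tr M.
Proof.
move=> M_neq0 M_sym M_psd.
pose e i : 'cV[R]_n := delta_mx i 0.
have qform_e i : qform M (e i) = M i i by rewrite /qform delta_mx_form.
have qform_pair i j t :
    qform M (e i + t *: e j) = M i i + t ^+ 2 * M j j + t * (M i j + M j i).
  rewrite qformD qformZ !qform_e [(t *: _)^T]linearZ /= -scalemxAr -!scalemxAl -scalerDr.
  have entry (A B : 'M[R]_1) : (t *: (A + B)) 0 0 = t * (A 0 0 + B 0 0) by rewrite !mxE.
  by rewrite entry !delta_mx_form.
have diag_ge0 i : 0 <= M i i by rewrite -qform_e.
rewrite lt_def sumr_ge0 // andbT; apply: contraNneq M_neq0 => tr0.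
have diag0 i : M i i = 0 by apply: (psumr_eq0P (fun i _ => diag_ge0 i) tr0).
apply/eqP/matrixP => i j; rewrite mxE.
have Mji : M j i = M i j by rewrite -[in LHS]M_sym mxE.
have := M_psd (e i + 1 *: e j); have := M_psd (e i + (-1) *: e j).
rewrite !qform_pair !diag0 Mji; lra.
Qed.

End QuadraticForm.

Section SimultaneousPermutation.
Variables (R : realType) (n : nat) (s : 'S_n).

Lemma perm_conjE (A : 'M[R]_n) i j : row_perm s (col_perm s A) i j = A (s i) (s j).
Proof. by rewrite !mxE. Qed.

Lemma in_classA_perm_conj (A : 'M[R]_n) :
  in_classA A -> in_classA (row_perm s (col_perm s A)).
Proof.
case=> [[A_ge0 A_sum] A_diag A_eq A_sym A_conn]; split.
- split=> [i j|i]; rewrite ?perm_conjE //.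
  under eq_bigr => j _ do rewrite perm_conjE.
  by rewrite -(A_sum (s i)) [RHS](reindex_inj (@perm_inj _ s)).
- by move=> i; rewrite perm_conjE.
- by move=> i j k; rewrite !perm_conjE; apply: A_eq.
- by move=> i j; rewrite !perm_conjE.
move=> i j; have /connectP [p p_path p_last] := A_conn (s i) (s j).
apply/connectP; exists (map (s^-1)%g p).
  have p_eq : p = map s (map (s^-1)%g p).
    by rewrite -map_comp map_id_in // => x _ /=; rewrite permKV.
  by move: p_path; rewrite {1}p_eq path_map; apply: sub_path => a b /=; rewrite perm_conjE.
by rewrite -[i in last i _](permK s) last_map -p_last permK.
Qed.

Lemma mulmx_perm_conj (A : 'M[R]_n) (y : 'cV[R]_n) :
  row_perm s (col_perm s A) *m row_perm s y = row_perm s (A *m y).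
Proof.
rewrite !row_permE col_permE !mulmxA -(mulmxA _ (perm_mx s^-1)) -perm_mxM.
by rewrite mulVg perm_mx1 mulmx1.
Qed.

End SimultaneousPermutation.

Section PermutationSum.
Variables (R : comPzRingType) (n : nat).
Implicit Types (F : 'I_n -> 'I_n -> R) (M : 'M[R]_n).

Definition perm_sum F i j := \sum_(s : 'S_n) F (s i) (s j).

Lemma perm_sumJ F (t : 'S_n) i j : perm_sum F (t i) (t j) = perm_sum F i j.
Proof.
by rewrite /perm_sum [RHS](reindex_inj (mulgI t)); apply: eq_bigr => s _; rewrite !permM.
Qed.

Lemma perm_sum_diag F i k : perm_sum F i i = perm_sum F k k.
Proof. by rewrite -(perm_sumJ F (tperm i k)) tpermL. Qed.

Lemma perm_sum_offdiag F i j k l : i != j -> k != l -> perm_sum F i j = perm_sum F k l.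
Proof.
move=> ij kl; pose j' := tperm i k j.
have kj' : k != j' by rewrite -[k](tpermL i k) (inj_eq perm_inj).
rewrite -(perm_sumJ F (tperm i k * tperm j' l)) !permM tpermL -/j' tpermL tpermD //.
all: by rewrite eq_sym.
Qed.

Lemma perm_sum_sum F :
  \sum_i \sum_j perm_sum F i j = #|{: 'S_n}|%:R * \sum_i \sum_j F i j.
Proof.
rewrite -sumr_const mulr_suml; under eq_bigr => i _ do rewrite exchange_big.
rewrite exchange_big; apply: eq_bigr => s _; rewrite mul1r.
rewrite [RHS](reindex_inj (@perm_inj _ s)); apply: eq_bigr => i _.
by rewrite [RHS](reindex_inj (@perm_inj _ s)).
Qed.

Lemma perm_sum_trace F : \sum_i perm_sum F i i = #|{: 'S_n}|%:R * \sum_i F i i.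
Proof.
rewrite -sumr_const mulr_suml exchange_big; apply: eq_bigr => s _.
by rewrite mul1r [RHS](reindex_inj (@perm_inj _ s)).
Qed.

Lemma perm_sum_bilinear M F : (1 < n)%N -> \sum_i \sum_j M i j = 0 ->
  n%:R * (n%:R - 1) * \sum_i \sum_j M i j * perm_sum F i j
  = #|{: 'S_n}|%:R * (n%:R * \sum_i F i i - \sum_i \sum_j F i j) * \tr M.
Proof.
move=> n_gt1 sumM; have n_gt0 := ltnW n_gt1.
pose i0 := Ordinal n_gt0; pose i1 := Ordinal n_gt1.
pose c := perm_sum F i0 i1; pose d := perm_sum F i0 i0 - c.
have WE i j : perm_sum F i j = c + (i == j)%:R * d.
  have [<-|ij] := eqVneq i j; last by rewrite mul0r addr0; apply: perm_sum_offdiag.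
  by rewrite mul1r (perm_sum_diag F i i0) /d addrC subrK.
have sumMW : \sum_i \sum_j M i j * perm_sum F i j = d * \tr M.
  under eq_bigr => i _ do under eq_bigr => j _ do rewrite WE mulrDr mulrCA.
  under eq_bigr => i _ do rewrite big_split /= sum_kronecker -mulr_suml.
  by rewrite big_split /= -!mulr_suml sumM mul0r add0r mulrC.
have sumW : \sum_i \sum_j perm_sum F i j = n%:R * (n%:R * c + d).
  under eq_bigr => i _ do under eq_bigr => j _ do rewrite WE.
  under eq_bigr => i _ do rewrite big_split /= sumr_const card_ord sum_kronecker.
  by rewrite big_split /= !sumr_const card_ord; ring.
have trW : \sum_i perm_sum F i i = n%:R * (c + d).
  under eq_bigr => i _ do rewrite WE eqxx mul1r.
  by rewrite sumr_const card_ord mulr_natl.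
have -> : #|{: 'S_n}|%:R * (n%:R * \sum_i F i i - \sum_i \sum_j F i j)
          = n%:R * (n%:R - 1) * d.
  by rewrite mulrBr mulrCA -perm_sum_trace -perm_sum_sum trW sumW; ring.
by rewrite sumMW mulrA.
Qed.

End PermutationSum.

Section Dispersion.
Variables (R : realType) (n : nat).

Definition dispersion (x : 'cV[R]_n) : R :=
  n%:R * \sum_i x i 0 ^+ 2 - (\sum_i x i 0) ^+ 2.

Lemma in_classQ_dispersion_le (M A : 'M[R]_n) (y : 'cV[R]_n) :
  (1 < n)%N -> in_classQ M -> in_classA A -> dispersion (A *m y) <= dispersion y.
Proof.
move=> n_gt1 [M_neq0 M_sym M_psd M_decr M_e] A_cls; set z := A *m y.
pose F a b := z a 0 * z b 0 - y a 0 * y b 0.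
have sumM : \sum_i \sum_j M i j = 0.
  apply: etrans M_e; rewrite qformE; apply: eq_bigr => i _; apply: eq_bigr => j _.
  by rewrite !mxE mul1r mulr1.
have sumF : n%:R * \sum_i F i i - \sum_i \sum_j F i j = dispersion z - dispersion y.
  have -> : \sum_i F i i = \sum_i z i 0 ^+ 2 - \sum_i y i 0 ^+ 2.
    by rewrite -sumrB; apply: eq_bigr => i _; rewrite /F !expr2.
  have -> : \sum_i \sum_j F i j = (\sum_i z i 0) ^+ 2 - (\sum_i y i 0) ^+ 2.
    rewrite !expr2 !mulr_suml -sumrB; apply: eq_bigr => i _.
    by rewrite !mulr_sumr -sumrB.
  rewrite /dispersion; ring.
have decr : \sum_i \sum_j M i j * perm_sum F i j <= 0.
  have -> : \sum_i \sum_j M i j * perm_sum F i j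
            = \sum_(s : 'S_n) (qform M (row_perm s z) - qform M (row_perm s y)).
    under eq_bigr => i _ do (under eq_bigr => j _ do rewrite mulr_sumr; rewrite exchange_big).
    rewrite exchange_big; apply: eq_bigr => s _.
    rewrite !qformE -sumrB; apply: eq_bigr => i _; rewrite -sumrB; apply: eq_bigr => j _.
    rewrite /F !mxE; ring.
  apply: sumr_le0 => s _; rewrite subr_le0 -mulmx_perm_conj.
  exact/M_decr/in_classA_perm_conj.
have := perm_sum_bilinear F n_gt1 sumM; rewrite sumF => identity.
have : #|{: 'S_n}|%:R * \tr M * (dispersion z - dispersion y) <= 0.
  rewrite mulrAC -identity; apply: mulr_ge0_le0 decr.
  by rewrite mulr_ge0 ?ler0n // subr_ge0 ler1n ltnW.
rewrite pmulr_rle0 ?subr_le0 // mulr_gt0 ?trace_gt0 // ltr0n.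
by apply/card_gt0P; exists 1%g.
Qed.

End Dispersion.

Lemma sum_ord_split5 (V : nmodType) N (F : nat -> V) : (5 <= N)%N ->
  \sum_(i < N) F i = F 0%N + F 1%N + F 2%N + F 3%N + F 4%N + \sum_(5 <= k < N) F k.
Proof.
move=> N_ge5; rewrite -(big_mkord xpredT) (big_cat_nat _ (n := 5)) //=.
by do 5 rewrite big_ltn //; rewrite big_geq // addr0 !addrA.
Qed.

Lemma sum_nat_kronecker (R : pzSemiRingType) m N (F : nat -> R) i : (m <= i < N)%N ->
  \sum_(m <= k < N) (k == i)%:R * F k = F i.
Proof.
case/andP=> m_le_i i_lt_N.
rewrite (big_cat_nat m_le_i (ltnW i_lt_N)) /= (big_ltn i_lt_N) eqxx mul1r.
rewrite !big1_seq ?add0r ?addr0 // => k; rewrite mem_index_iota => k_range;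
  rewrite (_ : (k == i) = false) ?mul0r //; lia.
Qed.

Local Close Scope ring_scope.

Definition tree_edge (k l : nat) : bool :=
  ((k == 0) && (0 < l <= 4)) || ((k == 4) && (5 <= l)).

Definition tree_adj (k l : nat) : bool := [|| k == l, tree_edge k l | tree_edge l k].

Definition tree_deg (N k : nat) : nat := if k == 0 then 5 else if k == 4 then N - 3 else 2.

Lemma tree_adj_sym k l : tree_adj k l = tree_adj l k.
Proof. rewrite /tree_adj /tree_edge; apply/idP/idP; lia. Qed.

Lemma tree_adj_leaf k l : 5 <= l -> tree_adj k l = (k == l) || (k == 4).
Proof. rewrite /tree_adj /tree_edge => l_ge5; apply/idP/idP; lia. Qed.

Lemma tree_deg_gt0 N k : 5 <= N -> 0 < tree_deg N k.
Proof. rewrite /tree_deg => N_ge5; case: ifP => //; case: ifP => //; lia. Qed.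

Local Open Scope ring_scope.

Section TreeExample.
Variables (R : realType) (N : nat).
Hypothesis N_ge5 : (5 <= N)%N.

Definition tree_neighbor_sum (F : nat -> R) (k : nat) : R :=
  if k == 0%N then F 0%N + F 1%N + F 2%N + F 3%N + F 4%N
  else if (k <= 3)%N then F 0%N + F k
  else if k == 4%N then F 0%N + F 4%N + \sum_(5 <= l < N) F l
  else F 4%N + F k.

Lemma sum_tree_adj (F : nat -> R) (i : 'I_N) :
  \sum_(j < N) (tree_adj i j)%:R * F j = tree_neighbor_sum F i.
Proof.
rewrite (sum_ord_split5 (fun j => (tree_adj i j)%:R * F j)) //.
case: i => k k_lt_N /=; rewrite /tree_neighbor_sum.
have [k_ge5|k_lt5] := leqP 5 k.
  have -> : \sum_(5 <= l < N) (tree_adj k l)%:R * F l = F k.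
    rewrite -[RHS](@sum_nat_kronecker R 5 N F k) ?k_ge5 //.
    apply: eq_big_nat => l l_range; rewrite tree_adj_sym tree_adj_leaf; last lia.
    by rewrite (_ : (l == 4)%N = false) ?orbF //; lia.
  rewrite !(tree_adj_sym k) !tree_adj_leaf //.
  by case: k k_lt_N k_ge5 => [|[|[|[|[|k]]]]] //= *; rewrite !mul0r mul1r !add0r.
have tail0 (j : nat) : (j <= 3)%N -> \sum_(5 <= l < N) (tree_adj j l)%:R * F l = 0.
  move=> j_le3; rewrite big1_seq // => l; rewrite mem_index_iota => l_range.
  rewrite tree_adj_leaf; last lia.
  by rewrite (_ : (j == l) || (j == 4%N) = false) ?mul0r //; lia.
have tail4 : \sum_(5 <= l < N) (tree_adj 4 l)%:R * F l = \sum_(5 <= l < N) F l.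
  by apply: eq_big_nat => l l_range; rewrite tree_adj_leaf ?orbT ?mul1r //; lia.
case: k k_lt_N k_lt5 => [|[|[|[|[|k]]]]] //= _ _; rewrite ?tail4 ?tail0 //.
all: by rewrite ?mul1r ?mul0r ?addr0.
Qed.

Lemma sum_tree_adj1 (i : 'I_N) : \sum_(j < N) (tree_adj i j)%:R = (tree_deg N i)%:R :> R.
Proof.
under eq_bigr => j _ do rewrite -[_%:R]mulr1.
rewrite (sum_tree_adj (fun=> 1)) /tree_neighbor_sum /tree_deg.
case: i => k k_lt_N /=; case: ifP => [_|_].
  by rewrite -[5%N]/(1 + 1 + 1 + 1 + 1)%N !natrD.
case: ifP => [k_le3|_]; first by rewrite (_ : (k == 4)%N = false) //; lia.
case: ifP => [_|_] //; rewrite sumr_const_nat (_ : (N - 3 = (N - 5) + 2)%N); last lia.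
by rewrite natrD addrC.
Qed.

Definition tree_mx : 'M[R]_N :=
  \matrix_(i, j) if tree_adj i j then ((tree_deg N i)%:R)^-1 else 0.

Lemma tree_mxE i j : tree_mx i j = (tree_adj i j)%:R * ((tree_deg N i)%:R)^-1.
Proof. by rewrite mxE; case: (tree_adj i j); rewrite ?mul1r ?mul0r. Qed.

Lemma tree_mx_gt0 i j : (0 < tree_mx i j) = tree_adj i j.
Proof.
rewrite mxE; case: (tree_adj i j); last by rewrite ltxx.
by rewrite invr_gt0 ltr0n tree_deg_gt0.
Qed.

Lemma tree_mx_classA : in_classA tree_mx.
Proof.
split.
- split=> [i j|i]; first by rewrite tree_mxE mulr_ge0 // invr_ge0 ler0n.
  under eq_bigr => j _ do rewrite tree_mxE.
  by rewrite -mulr_suml sum_tree_adj1 mulfV // pnatr_eq0 -lt0n tree_deg_gt0.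
- by move=> i; rewrite tree_mx_gt0 /tree_adj eqxx.
- by move=> i j k; rewrite !tree_mx_gt0 => adj_ij adj_ik; rewrite !mxE adj_ij adj_ik.
- by move=> i j; rewrite !tree_mx_gt0 tree_adj_sym.
have root : (0 < N)%N by lia.
have hub : (4 < N)%N by lia.
pose i0 := Ordinal root; pose i4 := Ordinal hub.
have adj_sym : symmetric (fun a b : 'I_N => tree_adj a b) by move=> a b; apply: tree_adj_sym.
have to_root (i : 'I_N) : connect (fun a b : 'I_N => tree_adj a b) i i0.
  have [i_ge5|i_lt5] := leqP 5 i.
    by apply: (connect_trans (y := i4)); apply: connect1;
      rewrite /= /tree_adj /tree_edge; lia.
  have [i_eq0|i_neq0] := eqVneq (val i) 0%N.
    by rewrite (_ : i = i0) ?connect0 //; apply: val_inj.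
  by apply: connect1; rewrite /= /tree_adj /tree_edge; lia.
move=> i j; rewrite (eq_connect (e' := fun a b : 'I_N => tree_adj a b)); last first.
  by move=> a b; rewrite tree_mx_gt0.
by apply: connect_trans (to_root i) _; rewrite (sym_connect_sym adj_sym).
Qed.

Definition tree_val (k : nat) : R :=
  if k == 0%N then -3 else if (k <= 3)%N then -1 else if k == 4%N then 3 else 1.

Definition tree_vec : 'cV[R]_N := \col_j tree_val j.

Definition tree_avg (k : nat) : R :=
  ((tree_deg N k)%:R)^-1 * tree_neighbor_sum tree_val k.

Lemma tree_mx_vecE i : (tree_mx *m tree_vec) i 0 = tree_avg i.
Proof.
rewrite mxE /tree_avg -sum_tree_adj mulr_sumr; apply: eq_bigr => j _.
by rewrite tree_mxE mxE mulrAC mulrC.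
Qed.

Lemma tree_dispersion_lt :
  (8 <= N)%N -> dispersion tree_vec < dispersion (tree_mx *m tree_vec).
Proof.
move=> N_ge8; rewrite /dispersion.
have sum_avg (G : R -> R) :
    \sum_i G ((tree_mx *m tree_vec) i 0) = \sum_(i < N) G (tree_avg i).
  by apply: eq_bigr => i _; rewrite tree_mx_vecE.
have sum_val (G : R -> R) : \sum_i G (tree_vec i 0) = \sum_(i < N) G (tree_val i).
  by apply: eq_bigr => i _; rewrite mxE.
rewrite (sum_avg (fun x => x ^+ 2)) (sum_avg id) (sum_val (fun x => x ^+ 2)) (sum_val id).
rewrite (sum_ord_split5 (fun k => tree_avg k ^+ 2)) // (sum_ord_split5 tree_avg) //.
rewrite (sum_ord_split5 (fun k => tree_val k ^+ 2)) // (sum_ord_split5 tree_val) //.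
pose q : R := (N - 5)%:R.
have tail (G : nat -> R) c : (forall k, (5 <= k)%N -> G k = c) -> \sum_(5 <= k < N) G k = c * q.
  move=> G_tail; rewrite /q mulr_natr -sumr_const_nat.
  by apply: eq_big_nat => k k_range; apply: G_tail; lia.
have leaf_val k : (5 <= k)%N -> tree_val k = 1.
  by move=> k_ge5; rewrite /tree_val ifN ?ifN ?ifN //; lia.
have leaf_avg k : (5 <= k)%N -> tree_avg k = 2.
  move=> k_ge5; rewrite /tree_avg /tree_neighbor_sum /tree_deg ifN ?ifN ?ifN; try lia.
  by rewrite (leaf_val k k_ge5) /tree_val /=; field.
rewrite (tail (fun k => tree_val k ^+ 2) 1); last by move=> k /leaf_val ->; rewrite expr1n.
rewrite (tail tree_val 1) //; rewrite (tail tree_avg 2) //.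
rewrite (tail (fun k => tree_avg k ^+ 2) (2 ^+ 2)); last by move=> k /leaf_avg ->.
have N_eq : N%:R = q + 5 by rewrite /q -natrD subnK.
have avg4 : tree_avg 4 = q / (q + 2).
  rewrite /tree_avg /tree_neighbor_sum /tree_deg /= (tail tree_val 1) //.
  rewrite (_ : (N - 3 = (N - 5) + 2)%N); last lia.
  by rewrite natrD /tree_val /= mulrC; congr (_ / _); ring.
have avg_small k : (k <= 3)%N -> tree_avg k = if k == 0%N then - (3 / 5) else -2.
  by case: k => [|[|[|[|k]]]] //= _;
    rewrite /tree_avg /tree_neighbor_sum /tree_deg /tree_val /=; field.
rewrite avg4 !avg_small //= N_eq /tree_val /=.
have q_ge3 : 3 <= q by rewrite /q ler_nat; lia.
clearbody q; clear -q_ge3.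
have q2_neq0 : q + 2 != 0 by rewrite lt0r_neq0 //; lra.
rewrite -subr_gt0 (_ : _ - _ = (594 * q ^+ 3 + 962 * q ^+ 2 - 4440 * q - 7776)
                               / (25 * (q + 2) ^+ 2)); last by field.
by rewrite divr_gt0 ?mulr_gt0 ?exprn_gt0 //; nra.
Qed.

End TreeExample.

Theorem theorem2 (R : realType) (n : nat) : (8 <= n)%N ->
  ~ (exists M : 'M[R]_n, in_classQ M).
Proof.
move=> n_ge8 [M M_classQ].
have n_ge5 : (5 <= n)%N by apply: leq_trans n_ge8.
have n_gt1 : (1 < n)%N by apply: leq_trans n_ge8.
have := in_classQ_dispersion_le (tree_vec R n) n_gt1 M_classQ (tree_mx_classA R n_ge5).
by rewrite leNgt (tree_dispersion_lt R n_ge5 n_ge8).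
Qed.
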